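(* Let $m,K$ be positive integers and $b_1,\dots,b_{3m}$ positive integers with $K/4<b_i<K/2$ and $\sum_i b_i=mK$. Set $W=100(5m)^2K$, $a_i=b_i+W$, $L=3W+K$, $\epsilon=1/(400(5m)^2)$, $h=\lfloor 4\epsilon L\rfloor$, $H=L+h$, $\beta_0=h/H$, $\beta_i=a_i/H-1/3$ ($1\le i\le 3m$). Let $X$ be the multiset consisting of $a_1,\dots,a_{3m}$, $m$ copies of $-H$ and $m$ copies of $h$, and let $T_{\min}$ be a minimum-cost addition tree over $X$. (1) If $z$ is a node of $T_{\min}$ with $z>0$, then $z$ is of the form $\lambda H$, $(1/3+\lambda)H$, or $(2/3+\lambda)H$. (2) If $z$ is an internal node of $T_{\min}$ with $z<0$, then $z$ is of the form $\lambda H$, $(-1/3+\lambda)H$, or $(-2/3+\lambda)H$.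
   Context: An addition tree over a multiset $X$ is a full binary tree whose leaves are labeled by the elements of $X$ (each used once), each internal node having value equal to the sum of its children's values; its cost is the sum of the absolute values of its internal nodes, and $T_{\min}$ minimizes the cost. Nodes are identified with their values. A ''$\lambda$'' denotes a sum of at most $5m$ numbers each of the form $\pm\beta_i$ with $0\le i\le 3m$ (different occurrences of $\lambda$ may denote different such sums). Every node value can be written as $(N/3+\lambda)H$ with $N$ an integer; since $|\lambda|\le 1/(500m)$, $N$ and the value of $\lambda$ are uniquely determined. *)

From HB Require Import structures.
From mathcomp Require Import all_boot all_order all_algebra.
Set Implicit Arguments. Unset Strict Implicit. Unset Printing Implicit Defensive.
Import Order.TTheory GRing.Theory Num.Theory.
Local Open Scope ring_scope.

Inductive atree := ALeaf of int | ANode of atree & atree.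

Fixpoint leaves (t : atree) : seq int :=
  match t with ALeaf x => [:: x] | ANode l r => leaves l ++ leaves r end.

Fixpoint tval (t : atree) : int :=
  match t with ALeaf x => x | ANode l r => tval l + tval r end.

Fixpoint internal_vals (t : atree) : seq int :=
  match t with ALeaf _ => [::]
  | ANode l r => tval t :: (internal_vals l ++ internal_vals r) end.

Fixpoint all_vals (t : atree) : seq int :=
  match t with ALeaf x => [:: x]
  | ANode l r => tval t :: (all_vals l ++ all_vals r) end.

Definition cost (t : atree) : int := \sum_(v <- internal_vals t) `|v|.

Definition is_addition_tree (X : seq int) (t : atree) : Prop :=
  perm_eq (leaves t) X.

Definition is_min_tree (X : seq int) (t : atree) : Prop :=
  is_addition_tree X t /\
  forall t', is_addition_tree X t' -> cost t <= cost t'.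

(* Parameters of the construction, given m, K, b (b indexed 1..3m). *)
Section Construction.
Variables (m K : nat) (b : nat -> int).

Definition Wp : int := (100 * (5 * m) ^ 2 * K)%N%:Z.
Definition ap (i : nat) : int := b i + Wp.
Definition Lp : int := 3 * Wp + K%:Z.
Definition epsp : rat := (400 * (5 * m) ^ 2)%N%:R^-1.
Definition hp : int := Num.floor (4 * epsp * Lp%:~R).
Definition Hp : int := Lp + hp.
Definition betap (i : nat) : rat :=
  if i == 0%N then hp%:~R / Hp%:~R else (ap i)%:~R / Hp%:~R - 3^-1.

Definition Xp : seq int :=
  [seq ap i | i <- iota 1 (3 * m)] ++ nseq m (- Hp) ++ nseq m hp.

(* z = (N/3 + lambda) H, lambda a sum of at most 5m terms +-beta_i, 0<=i<=3m *)
Definition lambda_form (N : int) (z : int) : Prop :=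
  exists s : seq (bool * nat),
    [/\ (size s <= 5 * m)%N,
        all (fun p => (p.2 <= 3 * m)%N) s &
        z%:~R = (N%:~R / 3 + \sum_(p <- s) (if p.1 then betap p.2 else - betap p.2))
                * Hp%:~R :> rat].
End Construction.

(* Round every leaf to a multiple of H/3: a_i to H/3, -H to itself and h to 0, i.e. to 1, -3
   and 0 thirds of H.  Each rounding error is O(K), so for every tree t over X the quantity
   3 cost(t) differs from H times the cost of the rounded tree by O(m^2 K), far below H.  In the
   rounded world every tree over X costs at least 3m, one unit for each leaf 1, plus one for each
   internal node of absolute value at least 3 (an amortization with the potential [pot]), while
   the star of the m groups ((((a, a), -H), a), h) costs exactly 3m.  Minimality of T therefore
   rules out rounded internal values of absolute value >= 3: every node z of T lies within
   O(mK) < H/3 of N H/3 with |N| <= 2 and N of the sign of z, and z/H - N/3 is the signed sum of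
   the betas of the leaves below z. *)

From Pilot Require Import Defs.
From HB Require Import structures.
From mathcomp Require Import all_boot all_order all_algebra.
From mathcomp Require Import zify ring.
(* Re-import so that [tval] is the value of a tree rather than the tuple projection. *)
Import Pilot.Defs.
Import Order.TTheory GRing.Theory Num.Theory.
Set Implicit Arguments.
Unset Strict Implicit.
Unset Printing Implicit Defensive.
Local Open Scope ring_scope.

Implicit Types (t u l r : atree) (x z : int).

Fixpoint tmap (f : int -> int) (t : atree) : atree :=
  match t with ALeaf x => ALeaf (f x) | ANode l r => ANode (tmap f l) (tmap f r) end.

Fixpoint subtree (u t : atree) : Prop :=
  u = t \/ if t is ANode l r then subtree u l \/ subtree u r else False.

Lemma tval_sum t : tval t = \sum_(x <- leaves t) x.
Proof.
elim: t => [x|l IHl r IHr] /=; first by rewrite big_seq1.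
by rewrite big_cat IHl IHr.
Qed.

Lemma leaves_tmap f t : leaves (tmap f t) = map f (leaves t).
Proof. by elim: t => [x|l IHl r IHr] //=; rewrite map_cat IHl IHr. Qed.

Lemma tval_tmap f t : tval (tmap f t) = \sum_(x <- leaves t) f x.
Proof. by rewrite tval_sum leaves_tmap big_map. Qed.

Lemma tval_node l r : tval (ANode l r) = tval l + tval r.
Proof. by []. Qed.

Lemma cost_leaf x : cost (ALeaf x) = 0.
Proof. by rewrite /cost big_nil. Qed.

Lemma cost_node l r : cost (ANode l r) = `|tval l + tval r| + cost l + cost r.
Proof. by rewrite /cost /= big_cons big_cat addrA. Qed.

Lemma size_internal_vals t : (size (internal_vals t)).+1 = size (leaves t).
Proof. by elim: t => [x|l IHl r IHr] //=; rewrite !size_cat -IHl -IHr addnS. Qed.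

Lemma subtree_refl t : subtree t t.
Proof. by case: t => *; left. Qed.

Lemma all_vals_subtree t z : z \in all_vals t -> exists2 u, subtree u t & tval u = z.
Proof.
elim: t => [x|l IHl r IHr] /=.
  by rewrite inE => /eqP ->; exists (ALeaf x) => //; left.
rewrite inE mem_cat => /orP[/eqP ->|/orP[/IHl|/IHr] [u uT <-]].
- by exists (ANode l r) => //; left.
- by exists u => //; right; left.
- by exists u => //; right; right.
Qed.

Lemma internal_vals_subtree t z : z \in internal_vals t ->
  exists l r, subtree (ANode l r) t /\ tval l + tval r = z.
Proof.
elim: t => [//|l IHl r IHr] /=.
rewrite inE mem_cat => /orP[/eqP ->|/orP[/IHl|/IHr] [l' [r' [lr_sub <-]]]].
- by exists l, r; split => //; left.
- by exists l', r'; split => //; right; left.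
- by exists l', r'; split => //; right; right.
Qed.

Lemma subtree_internal_vals_tmap f l r t : subtree (ANode l r) t ->
  tval (tmap f (ANode l r)) \in internal_vals (tmap f t).
Proof.
elim: t => [x [//|//]|l' IHl r' IHr] /=.
case=> [[-> ->]|[/IHl|/IHr] lr_in]; rewrite inE ?eqxx //.
- by rewrite mem_cat lr_in orbT.
- by rewrite mem_cat lr_in !orbT.
Qed.

Lemma subtree_leaves u t : subtree u t -> exists s, perm_eq (leaves t) (leaves u ++ s).
Proof.
elim: t => [x [-> | //]|l IHl r IHr]; first by exists [::]; rewrite cats0.
case=> [->|[/IHl|/IHr] [s perm_s]]; first by exists [::]; rewrite cats0.
- by exists (s ++ leaves r); rewrite /= catA perm_cat2r.
- by exists (s ++ leaves l); rewrite /= perm_catC catA perm_cat2r.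
Qed.

Section Rounding.
Variables (nu : int -> int) (c H : int).
Hypotheses (c_ge0 : 0 <= c) (H_ge0 : 0 <= H).

Let err x := `|c * x - H * nu x|.

Lemma tval_tmap_approx t : `|c * tval t - H * tval (tmap nu t)| <= \sum_(x <- leaves t) err x.
Proof.
rewrite tval_tmap tval_sum !mulr_sumr -sumrB.
exact: ler_norm_sum.
Qed.

Lemma cost_tmap_approx (B : int) t : \sum_(x <- leaves t) err x <= B ->
  `|c * cost t - H * cost (tmap nu t)| <= (size (internal_vals t))%:R * B.
Proof.
elim: t => [x|l IHl r IHr] errB /=; first by rewrite !cost_leaf !mulr0 subrr normr0 mul0r.
have err_ge0 s : 0 <= \sum_(x <- s) err x by apply: sumr_ge0.
have {}IHl : `|c * cost l - H * cost (tmap nu l)| <= (size (internal_vals l))%:R * B.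
  by apply: IHl; apply: le_trans errB; rewrite /= big_cat lerDl.
have {}IHr : `|c * cost r - H * cost (tmap nu r)| <= (size (internal_vals r))%:R * B.
  by apply: IHr; apply: le_trans errB; rewrite /= big_cat lerDr.
have root_approx : `|c * `|tval l + tval r| - H * `|tval (tmap nu l) + tval (tmap nu r)| | <= B.
  rewrite -[c]ger0_norm // -[H]ger0_norm // -!normrM.
  apply: le_trans (ler_dist_dist _ _) _; apply: le_trans errB.
  exact: (tval_tmap_approx (ANode l r)).
rewrite !cost_node size_cat -addn1 !natrD !mulrDl mul1r.
set A := `|tval l + tval r| in root_approx *.
set A' := `|tval (tmap nu l) + tval (tmap nu r)| in root_approx *.
have -> : c * (A + cost l + cost r) - H * (A' + cost (tmap nu l) + cost (tmap nu r)) =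
  (c * A - H * A') + (c * cost l - H * cost (tmap nu l)) + (c * cost r - H * cost (tmap nu r)).
  by ring.
apply: le_trans (ler_normD _ _) _.
apply: le_trans (lerD (ler_normD _ _) (lexx _)) _.
by rewrite [X in _ <= X]addrC addrA; apply: lerD (lerD root_approx IHl) IHr.
Qed.
End Rounding.

Definition pot (n : int) : int :=
  if n == 0 then 0 else if 0 < n then 2 - n else if (n %% 3)%Z == 0 then 0 else -1.

Definition is_big (v : int) : bool := 3 <= `|v|.

Definition big_nodes t : nat := count is_big (internal_vals t).

Lemma pot_add a b : (is_big (a + b))%:R <= `|a + b| + pot (a + b) - pot a - pot b.
Proof. by rewrite /is_big /pot; repeat case: ifP => ?; lia. Qed.

Lemma cost_ge_ones t : all (fun x => (x == 1) || (x == -3) || (x == 0)) (leaves t) ->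
  (count (pred1 1) (leaves t))%:R - pot (tval t) + (big_nodes t)%:R <= cost t.
Proof.
elim: t => [x|l IHl r IHr] /=.
  by rewrite andbT cost_leaf /big_nodes /pot /=; case/orP => [/orP[]|] /eqP ->.
rewrite all_cat => /andP[/IHl {}IHl /IHr {}IHr].
have := pot_add (tval l) (tval r).
rewrite cost_node /big_nodes /= !count_cat !natrD -/(big_nodes l) -/(big_nodes r).
move: (is_big _) (count_mem 1 (leaves l)) (count_mem 1 (leaves r)) IHl IHr.
move=> root_big ones_l ones_r; lia.
Qed.

Lemma ler_sum_size (T : eqType) (s : seq T) (f : T -> int) (c : int) :
  (forall y, y \in s -> f y <= c) -> \sum_(y <- s) f y <= (size s)%:R * c.
Proof.
elim: s => [|y0 s IH] le_c; first by rewrite big_nil mul0r.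
rewrite big_cons /= -addn1 natrD mulrDl mul1r addrC lerD ?le_c ?mem_head //.
by apply: IH => y sy; rewrite le_c // inE sy orbT.
Qed.

Lemma approx_sign (z N H : int) : 0 < H -> `|3 * z - H * N| < H ->
  (0 < z -> 0 <= N) /\ (z < 0 -> N <= 0).
Proof.
move=> H_gt0; rewrite ltr_norml => /andP[lo hi]; split=> z_sgn; rewrite leNgt; apply/negP => N_sgn.
- have : H * N <= - H by rewrite -mulrN1 ler_pM2l //; lia.
  lia.
- have : H <= H * N by rewrite -[X in X <= _]mulr1 ler_pM2l //; lia.
  lia.
Qed.

Section Construction.
Variables (m K : nat) (b : nat -> int).
Hypotheses (m_gt0 : (0 < m)%N) (K_gt0 : (0 < K)%N).
Hypothesis b_bounds : forall i, (1 <= i <= 3 * m)%N ->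
  0 < b i /\ (K%:R / 4 < (b i)%:~R :> rat) /\ ((b i)%:~R < K%:R / 2 :> rat).

Local Notation W := (Wp m K).
Local Notation h := (hp m K).
Local Notation H := (Hp m K).
Local Notation a := (ap m K b).
Local Notation X := (Xp m K b).

Lemma b_range i : (1 <= i <= 3 * m)%N -> 0 < b i /\ 2 * b i < K%:Z.
Proof.
move=> /b_bounds[b_gt0 [_ b_lt]]; split => //.
by rewrite -(ltr_int rat) intrM -ltr_pdivlMl // mulrC.
Qed.

Lemma K_le_mmK : (K <= m * K <= m * m * K)%N.
Proof. by rewrite leq_pmull //= -mulnA leq_pmull. Qed.

Lemma W_eq : W = 2500 * (m * m * K)%N%:Z.
Proof. rewrite /Wp; lia. Qed.

Lemma h_range : 0 <= h <= 4 * K%:Z.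
Proof.
set c := (400 * (5 * m) ^ 2)%N.
have c_gt0 : (0 < c)%N by rewrite /c muln_gt0 expn_gt0 muln_gt0 m_gt0.
have eps_c : epsp m * c%:R = 1 by rewrite /epsp mulVf // pnatr_eq0 -lt0n.
have L_le : Lp m K <= (c * K)%N%:Z by rewrite /Lp /Wp /c; nia.
apply/andP; split.
  by rewrite /hp floor_ge0 !mulr_ge0 ?invr_ge0 ?ler0z // /Lp; lia.
rewrite -(ler_int rat); apply: le_trans (floor_le _) _.
apply: (@le_trans _ _ (4 * epsp m * ((c * K)%N%:Z)%:~R)).
  by rewrite ler_wpM2l ?mulr_ge0 ?invr_ge0 ?ler_int.
have -> : ((c * K)%N%:Z)%:~R = c%:R * K%:R :> rat by rewrite -pmulrn natrM.
by rewrite -mulrA (mulrA (epsp m)) eps_c mul1r intrM -pmulrn.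
Qed.

Lemma H_eq : H = 3 * W + K%:Z + h.
Proof. by []. Qed.

Lemma H_gt0 : 0 < H.
Proof. have := h_range; have := K_le_mmK; rewrite H_eq W_eq; lia. Qed.

Lemma H_neq0 : H%:~R != 0 :> rat.
Proof. by rewrite intr_eq0 gt_eqF ?H_gt0. Qed.

Lemma H_ge : 7500 * (m * m * K)%N%:Z <= H.
Proof. have := h_range; rewrite H_eq W_eq; lia. Qed.

Definition thirds x : int := if x == - H then -3 else if x == h then 0 else 1.

Definition rounded t := tmap thirds t.

Lemma mem_Xp x : x \in X ->
  [\/ exists2 i, (1 <= i <= 3 * m)%N & x = a i, x = - H | x = h].
Proof.
rewrite !mem_cat !mem_nseq => /or3P[/mapP[i] | /andP[_ /eqP] | /andP[_ /eqP]]; last 2 first.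
- by move->; apply: Or32.
- by move->; apply: Or33.
by rewrite mem_iota => i_range ->; apply: Or31; exists i => //; lia.
Qed.

Lemma thirds_a i : (1 <= i <= 3 * m)%N -> thirds (a i) = 1.
Proof.
move=> /b_range [b_gt0 _]; have := h_range; have := K_le_mmK.
by rewrite /thirds /ap H_eq W_eq; case: eqP => [|_]; [lia | case: eqP => //; lia].
Qed.

Lemma thirds_negH : thirds (- H) = -3.
Proof. by rewrite /thirds eqxx. Qed.

Lemma thirds_h : thirds h = 0.
Proof.
have := h_range; have := K_le_mmK.
by rewrite /thirds H_eq W_eq eqxx; case: eqP => //; lia.
Qed.

Lemma leaf_error x : x \in X -> `|3 * x - H * thirds x| <= 12 * K%:Z.
Proof.
case/mem_Xp => [[i i_range ->]|->|->]; have := h_range.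
- have := b_range i_range; rewrite thirds_a // /ap H_eq; lia.
- rewrite thirds_negH; lia.
- rewrite thirds_h; lia.
Qed.

Lemma rounding_error u : {subset leaves u <= X} -> (size (leaves u) <= 5 * m)%N ->
  \sum_(x <- leaves u) `|3 * x - H * thirds x| <= 60 * (m * K)%N%:Z.
Proof.
move=> uX u_size.
apply: le_trans (ler_sum_size (c := 12 * K%:Z) (fun x xu => leaf_error (uX x xu))) _.
have -> : 60 * (m * K)%N%:Z = (5 * m)%N%:R * (12 * K%:Z) by rewrite natz; lia.
by rewrite ler_wpM2r ?ler_nat.
Qed.

Definition beta_sum (s : seq (bool * nat)) : rat :=
  \sum_(p <- s) (if p.1 then betap m K b p.2 else - betap m K b p.2).

Definition beta_indices_ok (s : seq (bool * nat)) := all (fun p => (p.2 <= 3 * m)%N) s.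

Lemma leaf_beta x : x \in X -> exists s, [/\ (size s <= 1)%N, beta_indices_ok s &
  x%:~R / H%:~R = (thirds x)%:~R / 3 + beta_sum s].
Proof.
case/mem_Xp => [[i i_range ->]|->|->].
- have i_neq0 : (i == 0%N) = false by case/andP: i_range; case: i.
  exists [:: (true, i)]; rewrite /beta_sum big_seq1 /betap /= thirds_a // i_neq0.
  by split; [|rewrite /beta_indices_ok /= andbT; lia|rewrite addrC subrK].
- by exists [::]; rewrite /beta_sum big_nil thirds_negH addr0 intrN mulNr divff ?H_neq0.
- exists [:: (true, 0%N)]; rewrite /beta_sum big_seq1 /betap /= thirds_h.
  by split => //; rewrite mul0r add0r.
Qed.

Lemma sum_beta (s : seq int) : {subset s <= X} -> exists q, [/\ (size q <= size s)%N,
  beta_indices_ok q &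
  \sum_(x <- s) x%:~R / H%:~R = (\sum_(x <- s) thirds x)%:~R / 3 + beta_sum q].
Proof.
elim: s => [|x s IH] sX.
  by exists [::]; rewrite /beta_sum !big_nil mul0r addr0.
have [q [q_size q_ok q_eq]] := IH (fun y sy => sX y (mem_behead (s := x :: s) sy)).
have [p [p_size p_ok p_eq]] := leaf_beta (sX x (mem_head x s)).
exists (p ++ q); split.
- by rewrite size_cat /=; lia.
- by move: p_ok q_ok; rewrite /beta_indices_ok all_cat => -> ->.
rewrite !big_cons p_eq q_eq /beta_sum big_cat /= intrD mulrDl.
by rewrite -!addrA; congr (_ + _); rewrite addrCA.
Qed.

Lemma lambda_form_rounded u : {subset leaves u <= X} -> (size (leaves u) <= 5 * m)%N ->
  lambda_form m K b (tval (rounded u)) (tval u).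
Proof.
move=> uX u_size; have [q [q_size q_ok q_eq]] := sum_beta uX.
exists q; split => //; first exact: leq_trans q_size u_size.
by rewrite tval_tmap -q_eq -mulr_suml tval_sum rmorph_sum divfK ?H_neq0.
Qed.

Lemma size_Xp : size X = (5 * m)%N.
Proof. by rewrite /Xp !size_cat size_map size_iota !size_nseq; lia. Qed.

Lemma sum_thirds_Xp : \sum_(x <- X) thirds x = 0.
Proof.
rewrite /Xp !big_cat big_map big_seq (eq_bigr (fun=> 1)) -?big_seq; last first.
  by move=> i; rewrite mem_iota => i_range; rewrite thirds_a //; lia.
rewrite big_const_seq count_predT size_iota !big_nseq thirds_negH thirds_h !iter_addr_0.
by rewrite mul0rn /= addr0 mulNrn -mulr_natr; lia.
Qed.

Lemma count_ones_Xp : count (pred1 1) (map thirds X) = (3 * m)%N.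
Proof.
rewrite /Xp !map_cat !count_cat !map_nseq !count_nseq thirds_negH thirds_h -map_comp count_map.
rewrite (@eq_in_count _ _ predT) ?count_predT ?size_iota /=; first lia.
by move=> i; rewrite mem_iota => i_range; rewrite /preim /= thirds_a //; lia.
Qed.

Definition triple k := ANode (ANode (ANode (ANode (ALeaf (a (3 * k).+1)) (ALeaf (a (3 * k).+2)))
  (ALeaf (- H))) (ALeaf (a (3 * k).+3))) (ALeaf h).

Fixpoint star k := if k is k'.+1 then ANode (star k') (triple k) else triple 0.

Lemma star_leaves k : perm_eq (leaves (star k))
  ([seq a i | i <- iota 1 (3 * k.+1)] ++ nseq k.+1 (- H) ++ nseq k.+1 h).
Proof.
apply/permP => P; elim: k => [|k IH]; first by rewrite /= muln0; lia.
rewrite -[leaves _]/(leaves (star k) ++ leaves (triple k.+1)) count_cat IH.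
rewrite (mulnSr 3 k.+1) iotaD !map_cat !count_cat.
have -> : iota (1 + 3 * k.+1) 3 = [:: (3 * k.+1).+1; (3 * k.+1).+2; (3 * k.+1).+3] by [].
rewrite /= !count_nseq /= !mulnS; lia.
Qed.

Lemma rounded_star k : (k < m)%N ->
  cost (rounded (star k)) = (3 * k.+1)%N%:Z /\ tval (rounded (star k)) = 0.
Proof.
have rounded_triple j : (j < m)%N ->
    cost (rounded (triple j)) = 3 /\ tval (rounded (triple j)) = 0.
  move=> j_lt; rewrite /rounded /= !cost_node !cost_leaf /=.
  by rewrite !thirds_a ?thirds_negH ?thirds_h //; lia.
elim: k => [|k IH] k_lt; first exact: rounded_triple.
have [IHc IHv] := IH (ltnW k_lt); have [Tc Tv] := rounded_triple _ k_lt.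
have -> : rounded (star k.+1) = ANode (rounded (star k)) (rounded (triple k.+1)) by [].
rewrite cost_node tval_node IHc Tc IHv Tv addr0 normr0 add0r; split => //; lia.
Qed.

Lemma star_Xp : perm_eq (leaves (star m.-1)) X /\ cost (rounded (star m.-1)) = (3 * m)%N%:Z.
Proof.
have m_pos := prednK m_gt0.
have m1_lt : (m.-1 < m)%N by rewrite ltn_predL.
split; first by have := star_leaves m.-1; rewrite m_pos.
by have [-> _] := rounded_star m1_lt; rewrite m_pos.
Qed.

Lemma subtree_leaves_Xp u t : perm_eq (leaves t) X -> subtree u t ->
  {subset leaves u <= X} /\ (size (leaves u) <= 5 * m)%N.
Proof.
move=> tX /subtree_leaves[s uts].
have usX : perm_eq (leaves u ++ s) X by rewrite perm_sym in uts; exact: perm_trans uts tX.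
split; first by move=> x xu; rewrite -(perm_mem usX) mem_cat xu.
by rewrite -size_Xp -(perm_size usX) size_cat leq_addr.
Qed.

Lemma rounded_cost_approx t : perm_eq (leaves t) X ->
  `|3 * cost t - H * cost (rounded t)| <= 300 * (m * m * K)%N%:Z.
Proof.
move=> tX; have [tX' t_size] := subtree_leaves_Xp tX (subtree_refl t).
have := cost_tmap_approx (nu := thirds) (ler0n _ 3) (ltW H_gt0) (rounding_error tX' t_size).
move/le_trans; apply.
have n_le : (size (internal_vals t) <= 5 * m)%N.
  by rewrite -ltnS size_internal_vals (perm_size tX) size_Xp.
have -> : 300 * (m * m * K)%N%:Z = (5 * m)%N%:R * (60 * (m * K)%N%:Z) by rewrite natz; lia.
by rewrite ler_wpM2r ?ler_nat.
Qed.

Lemma rounded_cost_ge t : perm_eq (leaves t) X ->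
  (3 * m)%N%:R + (big_nodes (rounded t))%:R <= cost (rounded t).
Proof.
move=> tX.
have leaves01 : all (fun x => (x == 1) || (x == -3) || (x == 0)) (leaves (rounded t)).
  rewrite leaves_tmap all_map; apply/allP => x _ /=.
  by rewrite /thirds; case: ifP => _ //; case: ifP.
have := cost_ge_ones leaves01.
rewrite leaves_tmap (permP (perm_map thirds tX)) count_ones_Xp tval_tmap (perm_big _ tX).
by rewrite sum_thirds_Xp subr0.
Qed.

Section MinimumTree.
Variable T : atree.
Hypothesis T_min : is_min_tree X T.

Lemma big_nodes_min : big_nodes (rounded T) = 0%N.
Proof.
have [TX T_le] := T_min; have [SX S_cost] := star_Xp.
have := ler_wpM2l (ltW H_gt0) (rounded_cost_ge TX); rewrite mulrDr => C_ge.
have := rounded_cost_approx TX; have := rounded_cost_approx SX; rewrite S_cost.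
have := T_le _ SX; have := H_ge; have := K_le_mmK.
have : (0 < big_nodes (rounded T))%N -> H <= H * (big_nodes (rounded T))%:R.
  by move=> nb_gt0; rewrite ler_peMr ?ler1n // ltW ?H_gt0.
set C := cost (rounded T); set nb := big_nodes (rounded T).
lia.
Qed.

Lemma rounded_node_small l r : subtree (ANode l r) T -> `|tval (rounded (ANode l r))| <= 2.
Proof.
move=> /(subtree_internal_vals_tmap thirds) lr_in.
have /hasPn/(_ _ lr_in) : ~~ has is_big (internal_vals (rounded T)).
  by rewrite has_count -/(big_nodes _) big_nodes_min.
by rewrite /is_big /rounded -ltNge; lia.
Qed.

Lemma rounded_subtree_le u : subtree u T -> tval (rounded u) <= 2.
Proof.
case: u => [x _|l r /rounded_node_small]; last lia.
by rewrite /= /thirds; case: ifP => _ //; case: ifP.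
Qed.

Lemma subtree_rounding u : subtree u T -> `|3 * tval u - H * tval (rounded u)| < H.
Proof.
have [TX _] := T_min; move=> /(subtree_leaves_Xp TX) [uX u_size].
have := le_trans (tval_tmap_approx thirds 3 H u) (rounding_error uX u_size).
have := H_ge; have := K_le_mmK; rewrite /rounded; lia.
Qed.

Lemma subtree_lambda_form u : subtree u T -> lambda_form m K b (tval (rounded u)) (tval u).
Proof.
have [TX _] := T_min; move=> /(subtree_leaves_Xp TX) [uX u_size].
exact: lambda_form_rounded.
Qed.

Lemma min_tree_pos_form z : z \in all_vals T -> 0 < z ->
  exists2 N : int, 0 <= N <= 2 & lambda_form m K b N z.
Proof.
move=> /all_vals_subtree[u uT <-] u_gt0; exists (tval (rounded u)); last exact: subtree_lambda_form.
have [N_ge0 _] := approx_sign H_gt0 (subtree_rounding uT).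
by rewrite N_ge0 ?rounded_subtree_le.
Qed.

Lemma min_tree_neg_form z : z \in internal_vals T -> z < 0 ->
  exists2 N : int, -2 <= N <= 0 & lambda_form m K b N z.
Proof.
move=> /internal_vals_subtree[l [r [lrT <-]]] lr_lt0.
exists (tval (rounded (ANode l r))); last exact: subtree_lambda_form.
have [_ N_le0] := approx_sign H_gt0 (subtree_rounding lrT).
by have := rounded_node_small lrT; have := N_le0 lr_lt0; lia.
Qed.

End MinimumTree.
End Construction.

Theorem lemma2p7 (m K : nat) (b : nat -> int) (T : atree) :
  (0 < m)%N -> (0 < K)%N ->
  (forall i, (1 <= i <= 3 * m)%N ->
     0 < b i /\ (K%:R / 4 < (b i)%:~R :> rat) /\ ((b i)%:~R < K%:R / 2 :> rat)) ->
  \sum_(1 <= i < (3 * m).+1) b i = (m * K)%N%:Z ->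
  is_min_tree (Xp m K b) T ->
  (forall z, z \in all_vals T -> 0 < z ->
     lambda_form m K b 0 z \/ lambda_form m K b 1 z \/ lambda_form m K b 2 z) /\
  (forall z, z \in internal_vals T -> z < 0 ->
     lambda_form m K b 0 z \/ lambda_form m K b (-1) z \/ lambda_form m K b (-2) z).
Proof.
move=> m_gt0 K_gt0 b_bounds _ T_min; split=> z z_in z_sgn.
- have [N N_range z_form] := min_tree_pos_form m_gt0 K_gt0 b_bounds T_min z_in z_sgn.
  have : N = 0 \/ N = 1 \/ N = 2 by lia.
  by case=> [|[|]] N_eq; rewrite N_eq in z_form; auto.
- have [N N_range z_form] := min_tree_neg_form m_gt0 K_gt0 b_bounds T_min z_in z_sgn.
  have : N = 0 \/ N = -1 \/ N = -2 by lia.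
  by case=> [|[|]] N_eq; rewrite N_eq in z_form; auto.
Qed.
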